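(* Let $\Phi$ be a join doctrine, let $X,Y$ be $\Phi$-continuous $\Phi$-suplattices, and let $f:X\to Y$ be a monotone map with a left adjoint $f^+:Y\to X$. Then $f$ preserves $\Phi$-joins iff $f^+$ preserves $\ll$ (i.e. $y\ll y'$ implies $f^+(y)\ll f^+(y')$). Consequently, if $X,Y$ are $\Phi$-continuous lattices, then $f\mapsto f^+$ is an order-isomorphism from $\Phi\mathbf{CtsLat}(X,Y)^{\mathrm{op}}$ onto the poset of maps $g:Y\to X$ preserving arbitrary joins and preserving $\ll$ (both ordered pointwise).
   Context: A join doctrine is a class $\Phi$ of posets such that: (1) the one-element poset is in $\Phi$; (2) if a poset $P$ is the union of a set $\mathcal{S}$ of subposets each in $\Phi$ and $\mathcal{S}$ (ordered by inclusion) is in $\Phi$, then $P\in\Phi$; (3) if $f:P\to Q$ is monotone with cofinal image and $P\in\Phi$ then $Q\in\Phi$; (4) cofinal subposets of members of $\Phi$ are in $\Phi$. For a poset $X$, $\Phi(X)$ is the set of lower subsets of $X$ which, as subposets, belong to $\Phi$. A $\Phi$-join is a join of a subset belonging to $\Phi$; a $\Phi$-suplattice is a poset with all $\Phi$-joins. For $x\in X$: $\Downarrow x:=\bigcap\{\phi\in\Phi(X)\mid x\le\bigvee\phi\}$; $y\ll x$ iff $y\in\Downarrow x$. $X$ is $\Phi$-continuous if for each $x$ there is $\phi\in\Phi(X)$ with $\phi\subseteq\Downarrow x$ and $x\le\bigvee\phi$; a $\Phi$-continuous lattice is a complete lattice that is $\Phi$-continuous. $\Phi\mathbf{CtsLat}(X,Y)$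 is the set of maps $X\to Y$ preserving arbitrary meets and $\Phi$-joins, ordered pointwise; its opposite has the reversed order. *)

From Stdlib Require Import PropExtensionality FunctionalExtensionality ProofIrrelevance.

Set Implicit Arguments.

Record Poset := {
  carrier :> Type;
  le : carrier -> carrier -> Prop;
  le_refl : forall x, le x x;
  le_trans : forall x y z, le x y -> le y z -> le x z;
  le_antisym : forall x y, le x y -> le y x -> x = y
}.

Arguments le {p} _ _.
Arguments le_antisym {p x y} _ _.
Arguments le_trans {p x y z} _ _.
Arguments le_refl {p} x.

Definition sub_poset (P : Poset) (A : P -> Prop) : Poset.
Proof.
  refine {| carrier := {x : P | A x};
            le := fun a b => le (proj1_sig a) (proj1_sig b) |}.
  - intros [x hx]; apply le_refl.
  - intros [x hx] [y hy] [z hz]; simpl; apply le_trans.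
  - intros [x hx] [y hy] h1 h2; simpl in *.
    assert (e := le_antisym h1 h2); subst y.
    f_equal; apply proof_irrelevance.
Defined.

Definition incl_poset {P : Type} (S : (P -> Prop) -> Prop) : Poset.
Proof.
  refine {| carrier := {A : P -> Prop | S A};
            le := fun A B => forall x, proj1_sig A x -> proj1_sig B x |}.
  - intros [A hA] x h; exact h.
  - intros [A hA] [B hB] [C hC] h1 h2 x h; auto.
  - intros [A hA] [B hB] h1 h2; simpl in *.
    assert (e : A = B).
    { apply functional_extensionality; intro x;
      apply propositional_extensionality; split; auto. }
    subst B; f_equal; apply proof_irrelevance.
Defined.

Definition unit_poset : Poset.
Proof.
  refine {| carrier := unit; le := fun _ _ => True |}; auto.
  intros [] [] _ _; reflexivity.
Defined.

Definition monotone {P Q : Poset} (f : P -> Q) : Prop :=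
  forall x y, le x y -> le (f x) (f y).

Definition cofinal_image {P Q : Poset} (f : P -> Q) : Prop :=
  forall q, exists p, le q (f p).

Definition cofinal {P : Poset} (A : P -> Prop) : Prop :=
  forall x, exists a, A a /\ le x a.

Definition poset_class := Poset -> Prop.

Definition join_doctrine (Phi : poset_class) : Prop :=
  Phi unit_poset /\
  (forall (P : Poset) (S : (P -> Prop) -> Prop),
               (forall x : P, exists A, S A /\ A x) ->
               (forall A, S A -> Phi (sub_poset P A)) ->
               Phi (incl_poset S) ->
               Phi P) /\
  (forall (P Q : Poset) (f : P -> Q),
               monotone f -> cofinal_image f -> Phi P -> Phi Q) /\
  (forall (P : Poset) (A : P -> Prop),
               cofinal A -> Phi P -> Phi (sub_poset P A)).

Definition upper_bound {X : Poset} (D : X -> Prop) (s : X) : Prop :=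
  forall d, D d -> le d s.
Definition is_lub {X : Poset} (D : X -> Prop) (s : X) : Prop :=
  upper_bound D s /\ forall u, upper_bound D u -> le s u.
Definition lower_bound {X : Poset} (D : X -> Prop) (s : X) : Prop :=
  forall d, D d -> le s d.
Definition is_glb {X : Poset} (D : X -> Prop) (s : X) : Prop :=
  lower_bound D s /\ forall u, lower_bound D u -> le u s.

Definition lower_set {X : Poset} (A : X -> Prop) : Prop :=
  forall x y, le y x -> A x -> A y.

Definition image {X Y : Type} (f : X -> Y) (D : X -> Prop) : Y -> Prop :=
  fun y => exists x, D x /\ y = f x.

Definition PhiX (Phi : poset_class) {X : Poset} (A : X -> Prop) : Prop :=
  lower_set A /\ Phi (sub_poset X A).

Definition Phi_suplattice (Phi : poset_class) (X : Poset) : Prop :=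
  forall D : X -> Prop, Phi (sub_poset X D) -> exists s, is_lub D s.

Definition complete_lattice (X : Poset) : Prop :=
  forall D : X -> Prop, exists s, is_lub D s.

Definition way_below_set (Phi : poset_class) {X : Poset} (x : X) : X -> Prop :=
  fun y => forall phi : X -> Prop, PhiX Phi phi ->
           forall s, is_lub phi s -> le x s -> phi y.

Definition way_below (Phi : poset_class) {X : Poset} (y x : X) : Prop :=
  way_below_set Phi x y.

Definition Phi_continuous (Phi : poset_class) (X : Poset) : Prop :=
  forall x : X, exists phi : X -> Prop,
    PhiX Phi phi /\ (forall y, phi y -> way_below_set Phi x y) /\
    exists s, is_lub phi s /\ le x s.

Definition left_adjoint {X Y : Poset} (g : Y -> X) (f : X -> Y) : Prop :=
  forall (y : Y) (x : X), le (g y) x <-> le y (f x).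

Definition preserves_Phi_joins (Phi : poset_class) {X Y : Poset} (f : X -> Y) : Prop :=
  forall D : X -> Prop, Phi (sub_poset X D) ->
    forall s, is_lub D s -> is_lub (image f D) (f s).

Definition preserves_all_joins {X Y : Poset} (f : X -> Y) : Prop :=
  forall (D : X -> Prop) s, is_lub D s -> is_lub (image f D) (f s).

Definition preserves_all_meets {X Y : Poset} (f : X -> Y) : Prop :=
  forall (D : X -> Prop) s, is_glb D s -> is_glb (image f D) (f s).

Definition preserves_way_below (Phi : poset_class) {X Y : Poset} (g : X -> Y) : Prop :=
  forall y y' : X, way_below Phi y y' -> way_below Phi (g y) (g y').

Definition PhiCtsLat_map (Phi : poset_class) {X Y : Poset} (f : X -> Y) : Prop :=
  preserves_all_meets f /\ preserves_Phi_joins Phi f.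

Definition pointwise_le {X Y : Poset} (f g : X -> Y) : Prop :=
  forall x, le (f x) (g x).

From Stdlib Require Import IndefiniteDescription.

(* The key fact is [way_below_lub]: if y ≪ x ≤ ⋁D with D in Φ, then y ≤ d for
   some d ∈ D, because the lower set generated by D is in Φ(X) (axiom (3)).
   If f preserves Φ-joins and f⁺y' ≤ ⋁φ, then y' ≤ f(⋁φ) = ⋁f(φ), so y ≪ y'
   gives y ≤ f x for some x ∈ φ, i.e. f⁺y ∈ φ.  Conversely, by continuity of Y
   it suffices to bound every y ≪ f(⋁D) by an upper bound u of f(D): then
   f⁺y ≪ f⁺f(⋁D) ≤ ⋁D, so f⁺y ≤ d ∈ D and y ≤ f d ≤ u.  Between complete
   lattices adjoints exist as soon as meets (resp. joins) are preserved, and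
   passing to adjoints reverses the pointwise order. *)

Definition downset {X : Poset} (D : X -> Prop) : X -> Prop :=
  fun x => exists d, D d /\ le x d.

Lemma downset_lower {X : Poset} (D : X -> Prop) : lower_set (downset D).
Proof.
  intros x y hyx [d [hd hxd]].
  exists d; split; [exact hd | exact (le_trans hyx hxd)].
Qed.

Lemma downset_lub {X : Poset} (D : X -> Prop) (s : X) :
  is_lub D s -> is_lub (downset D) s.
Proof.
  intros [hub hleast]; split.
  - intros x [d [hd hxd]]. exact (le_trans hxd (hub d hd)).
  - intros u hu. apply hleast. intros d hd.
    apply hu. exists d; split; [exact hd | apply le_refl].
Qed.

Lemma way_below_le_r (Phi : poset_class) {X : Poset} (y x x' : X) :
  way_below Phi y x -> le x x' -> way_below Phi y x'.
Proof.
  intros hyx hxx' phi hphi s hs hx's.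
  exact (hyx phi hphi s hs (le_trans hxx' hx's)).
Qed.

Section JoinDoctrine.

Variable Phi : poset_class.
Hypothesis hPhi : join_doctrine Phi.

Lemma Phi_sub_of_cofinal_map {X Y : Poset} (f : X -> Y)
  (D : X -> Prop) (E : Y -> Prop) :
  monotone f ->
  (forall x, D x -> E (f x)) ->
  (forall y, E y -> exists x, D x /\ le y (f x)) ->
  Phi (sub_poset X D) -> Phi (sub_poset Y E).
Proof.
  intros hmono hmaps hcof. destruct hPhi as [_ [_ [hcofinal _]]].
  apply (hcofinal _ _
           (fun a : sub_poset X D =>
              exist E (f (proj1_sig a)) (hmaps _ (proj2_sig a)) : sub_poset Y E)).
  - intros [a ha] [b hb] hab. exact (hmono a b hab).
  - intros [y hy]. destruct (hcof y hy) as [x [hx hyx]].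
    exists (exist D x hx). exact hyx.
Qed.

Lemma Phi_image {X Y : Poset} (f : X -> Y) (D : X -> Prop) :
  monotone f -> Phi (sub_poset X D) -> Phi (sub_poset Y (image f D)).
Proof.
  intros hmono hD. apply (Phi_sub_of_cofinal_map f D); [exact hmono | | | exact hD].
  - intros x hx. exists x; split; [exact hx | reflexivity].
  - intros y [x [hx ->]]. exists x; split; [exact hx | apply le_refl].
Qed.

Lemma PhiX_downset {X : Poset} (D : X -> Prop) :
  Phi (sub_poset X D) -> PhiX Phi (downset D).
Proof.
  intros hD. split; [apply downset_lower |].
  apply (Phi_sub_of_cofinal_map (fun x => x) D); [ | | | exact hD].
  - intros x y hxy. exact hxy.
  - intros x hx. exists x; split; [exact hx | apply le_refl].
  - intros y [d [hd hyd]]. exists d; split; assumption.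
Qed.

Lemma way_below_lub {X : Poset} (D : X -> Prop) (s y x : X) :
  way_below Phi y x -> Phi (sub_poset X D) -> is_lub D s -> le x s ->
  exists d, D d /\ le y d.
Proof.
  intros hyx hD hs hxs.
  exact (hyx (downset D) (PhiX_downset D hD) s (downset_lub D s hs) hxs).
Qed.

Lemma Phi_continuous_le {X : Poset} (x u : X) :
  Phi_continuous Phi X ->
  (forall y, way_below Phi y x -> le y u) -> le x u.
Proof.
  intros hcont hbelow.
  destruct (hcont x) as [psi [_ [hpsi [t [[_ hleast] hxt]]]]].
  apply (le_trans hxt), hleast.
  intros y hy. exact (hbelow y (hpsi y hy)).
Qed.

End JoinDoctrine.

Section Adjunction.

Context {X Y : Poset} (g : Y -> X) (f : X -> Y).
Hypothesis hadj : left_adjoint g f.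

Lemma adjoint_unit (y : Y) : le y (f (g y)).
Proof. apply hadj, le_refl. Qed.

Lemma adjoint_counit (x : X) : le (g (f x)) x.
Proof. apply hadj, le_refl. Qed.

Lemma right_adjoint_monotone : monotone f.
Proof. intros x x' hxx'. apply hadj. exact (le_trans (adjoint_counit x) hxx'). Qed.

Lemma left_adjoint_monotone : monotone g.
Proof. intros y y' hyy'. apply hadj. exact (le_trans hyy' (adjoint_unit y')). Qed.

Lemma left_adjoint_preserves_joins : preserves_all_joins g.
Proof.
  intros D s [hub hleast]. split.
  - intros d [y [hy ->]]. exact (left_adjoint_monotone _ _ (hub y hy)).
  - intros u hu. apply hadj, hleast. intros y hy.
    apply hadj, hu. exists y; split; [exact hy | reflexivity].
Qed.

Lemma right_adjoint_preserves_meets : preserves_all_meets f.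
Proof.
  intros D s [hlb hgreatest]. split.
  - intros d [x [hx ->]]. exact (right_adjoint_monotone _ _ (hlb x hx)).
  - intros u hu. apply hadj, hgreatest. intros x hx.
    apply hadj, hu. exists x; split; [exact hx | reflexivity].
Qed.

Lemma right_adjoint_preserves_Phi_joins (Phi : poset_class) :
  join_doctrine Phi -> Phi_continuous Phi Y ->
  preserves_way_below Phi g -> preserves_Phi_joins Phi f.
Proof.
  intros hPhi hcont hwb D hD s hs. split.
  - intros d [x [hx ->]]. exact (right_adjoint_monotone _ _ (proj1 hs x hx)).
  - intros u hu. apply (Phi_continuous_le Phi); [exact hcont |].
    intros y hy.
    assert (hgy : way_below Phi (g y) s)
      by exact (way_below_le_r Phi _ _ _ (hwb _ _ hy) (adjoint_counit s)).
    destruct (way_below_lub Phi hPhi D s (g y) s hgy hD hs (le_refl s))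
      as [d [hd hgyd]].
    apply (le_trans (proj1 (hadj y d) hgyd)), hu.
    exists d; split; [exact hd | reflexivity].
Qed.

Lemma left_adjoint_preserves_way_below (Phi : poset_class) :
  join_doctrine Phi -> preserves_Phi_joins Phi f -> preserves_way_below Phi g.
Proof.
  intros hPhi hjoins y y' hyy' phi [hlower hphi] s hs hgy's.
  destruct (way_below_lub Phi hPhi (image f phi) (f s) y y' hyy'
              (Phi_image Phi hPhi f phi right_adjoint_monotone hphi)
              (hjoins phi hphi s hs) (proj1 (hadj y' s) hgy's))
    as [d [[x [hx ->]] hyfx]].
  exact (hlower x (g y) (proj2 (hadj y x) hyfx) hx).
Qed.

End Adjunction.

Lemma adjoint_pointwise_le_iff {X Y : Poset} (f1 f2 : X -> Y) (g1 g2 : Y -> X) :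
  left_adjoint g1 f1 -> left_adjoint g2 f2 ->
  (pointwise_le f2 f1 <-> pointwise_le g1 g2).
Proof.
  intros hadj1 hadj2. split.
  - intros hf y. apply hadj1. exact (le_trans (adjoint_unit g2 f2 hadj2 y) (hf _)).
  - intros hg x. apply hadj1. exact (le_trans (hg _) (adjoint_counit g2 f2 hadj2 x)).
Qed.

Lemma complete_lattice_glb {X : Poset} :
  complete_lattice X -> forall D : X -> Prop, exists s, is_glb D s.
Proof.
  intros hcl D. destruct (hcl (lower_bound D)) as [s [hub hleast]].
  exists s. split.
  - intros d hd. apply hleast. intros u hu. exact (hu d hd).
  - intros u hu. exact (hub u hu).
Qed.

Lemma preserves_all_meets_monotone {X Y : Poset} (f : X -> Y) :
  preserves_all_meets f -> monotone f.
Proof.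
  intros hmeets x x' hxx'.
  assert (hglb : is_glb (fun z => z = x \/ z = x') x).
  { split.
    - intros d [-> | ->]; [apply le_refl | exact hxx'].
    - intros u hu. apply hu. left; reflexivity. }
  apply (proj1 (hmeets _ _ hglb)). exists x'; split; [right |]; reflexivity.
Qed.

Lemma preserves_all_joins_monotone {X Y : Poset} (g : X -> Y) :
  preserves_all_joins g -> monotone g.
Proof.
  intros hjoins x x' hxx'.
  assert (hlub : is_lub (fun z => z = x \/ z = x') x').
  { split.
    - intros d [-> | ->]; [exact hxx' | apply le_refl].
    - intros u hu. apply hu. right; reflexivity. }
  apply (proj1 (hjoins _ _ hlub)). exists x; split; [left |]; reflexivity.
Qed.

Lemma left_adjoint_of_meets {X Y : Poset} (f : X -> Y) :
  complete_lattice X -> preserves_all_meets f -> exists g, left_adjoint g f.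
Proof.
  intros hcl hmeets.
  destruct (functional_choice (fun y x => is_glb (fun x => le y (f x)) x))
    as [g hg].
  { intros y. exact (complete_lattice_glb hcl _). }
  exists g. intros y x. split.
  - intros hgyx.
    assert (hyfg : le y (f (g y))).
    { apply (proj2 (hmeets _ _ (hg y))). intros d [z [hz ->]]. exact hz. }
    exact (le_trans hyfg (preserves_all_meets_monotone f hmeets _ _ hgyx)).
  - intros hyfx. exact (proj1 (hg y) x hyfx).
Qed.

Lemma right_adjoint_of_joins {X Y : Poset} (g : Y -> X) :
  complete_lattice Y -> preserves_all_joins g -> exists f, left_adjoint g f.
Proof.
  intros hcl hjoins.
  destruct (functional_choice (fun x y => is_lub (fun y => le (g y) x) y))
    as [f hf].
  { intros x. exact (hcl _). }
  exists f. intros y x. split.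
  - intros hgyx. exact (proj1 (hf x) y hgyx).
  - intros hyfx.
    assert (hgfx : le (g (f x)) x).
    { apply (proj2 (hjoins _ _ (hf x))). intros d [z [hz ->]]. exact hz. }
    exact (le_trans (preserves_all_joins_monotone g hjoins _ _ hyfx) hgfx).
Qed.

Theorem proposition2p7 (Phi : poset_class) (hPhi : join_doctrine Phi) :
  (* Part 1 *)
  (forall (X Y : Poset),
     Phi_suplattice Phi X -> Phi_suplattice Phi Y ->
     Phi_continuous Phi X -> Phi_continuous Phi Y ->
     forall (f : X -> Y) (fp : Y -> X),
       monotone f -> left_adjoint fp f ->
       (preserves_Phi_joins Phi f <-> preserves_way_below Phi fp)) /\
  (* Part 2: f |-> f^+ is an order isomorphism
     ΦCtsLat(X,Y)^op  ≅  { g : Y -> X | g preserves all joins and ≪ } *)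
  (forall (X Y : Poset),
     complete_lattice X -> complete_lattice Y ->
     Phi_continuous Phi X -> Phi_continuous Phi Y ->
     (* well-defined into the target *)
     (forall f : X -> Y, PhiCtsLat_map Phi f ->
        exists fp : Y -> X, left_adjoint fp f /\
          preserves_all_joins fp /\ preserves_way_below Phi fp) /\
     (* surjective *)
     (forall g : Y -> X, preserves_all_joins g -> preserves_way_below Phi g ->
        exists f : X -> Y, PhiCtsLat_map Phi f /\ left_adjoint g f) /\
     (* order-preserving and order-reflecting for the opposite order *)
     (forall (f1 f2 : X -> Y) (g1 g2 : Y -> X),
        PhiCtsLat_map Phi f1 -> PhiCtsLat_map Phi f2 ->
        left_adjoint g1 f1 -> left_adjoint g2 f2 ->
        (pointwise_le f2 f1 <-> pointwise_le g1 g2))).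
Proof.
  split.
  - intros X Y _ _ _ hcontY f fp _ hadj. split.
    + exact (left_adjoint_preserves_way_below fp f hadj Phi hPhi).
    + exact (right_adjoint_preserves_Phi_joins fp f hadj Phi hPhi hcontY).
  - intros X Y hclX hclY _ hcontY. split; [| split].
    + intros f [hmeets hjoins].
      destruct (left_adjoint_of_meets f hclX hmeets) as [fp hadj].
      exists fp. split; [exact hadj | split].
      * exact (left_adjoint_preserves_joins fp f hadj).
      * exact (left_adjoint_preserves_way_below fp f hadj Phi hPhi hjoins).
    + intros g hjoins hwb.
      destruct (right_adjoint_of_joins g hclY hjoins) as [f hadj].
      exists f. split; [split | exact hadj].
      * exact (right_adjoint_preserves_meets g f hadj).
      * exact (right_adjoint_preserves_Phi_joins g f hadj Phi hPhi hcontY hwb).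
    + intros f1 f2 g1 g2 _ _. exact (adjoint_pointwise_le_iff f1 f2 g1 g2).
Qed.
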